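(* Let $H$ be a complex Hilbert space, $A\in B(H)$ a nonzero positive semidefinite operator with closed range, and $T\in B_{A^{1/2}}(H)$. Then every $\lambda\in\mathbb C$ with $|\lambda|>\|T\|_A$ belongs to $\rho_A(T)$.
   Context: $\|x\|_A=\langle Ax,x\rangle^{1/2}$. For $S\in B(H)$, $\|S\|_A=\sup\{\|Sx\|_A : x\in\overline{R(A)},\ \|x\|_A=1\}$. $B_{A^{1/2}}(H)=\{S\in B(H): R(S^*A^{1/2})\subset R(A^{1/2})\}$. $S\in B_{A^{1/2}}(H)$ is $A$-invertible in $B_{A^{1/2}}(H)$ if there is a nonzero $R\in B_{A^{1/2}}(H)$ with $ASR=ARS=A$; $\rho_A(S)=\{\lambda\in\mathbb C:\lambda I-S$ is $A$-invertible in $B_{A^{1/2}}(H)\}$. *)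

From HB Require Import structures.
From mathcomp Require Import all_boot all_order all_algebra.
From mathcomp Require Import classical_sets reals.
From mathcomp Require Import complex.
Set Implicit Arguments. Unset Strict Implicit. Unset Printing Implicit Defensive.
Import Order.TTheory GRing.Theory Num.Theory.
Local Open Scope ring_scope.

Section Hilbert.
Variables (R : realType) (V : lmodType R[i]) (ip : V -> V -> R[i]).

Definition inner_product : Prop :=
  [/\ (forall (a : R[i]) (x y z : V), ip (a *: x + y) z = a * ip x z + ip y z),
      (forall x y : V, ip y x = (ip x y)^*),
      (forall x : V, 0 <= ip x x) &
      (forall x : V, ip x x = 0 -> x = 0)].

Definition hnorm (x : V) : R := Num.sqrt (complex.Re (ip x x)).

Definition hconv (u : nat -> V) (l : V) : Prop :=
  forall e : R, 0 < e -> exists N : nat, forall n, (N <= n)%N -> hnorm (u n - l) < e.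

Definition hcauchy (u : nat -> V) : Prop :=
  forall e : R, 0 < e -> exists N : nat,
    forall m n, (N <= m)%N -> (N <= n)%N -> hnorm (u m - u n) < e.

Definition hcomplete : Prop := forall u, hcauchy u -> exists l, hconv u l.

Definition hilbert : Prop := inner_product /\ hcomplete.

Definition lin_op (S : V -> V) : Prop :=
  forall (a : R[i]) (x y : V), S (a *: x + y) = a *: S x + S y.

Definition bounded_op (S : V -> V) : Prop :=
  lin_op S /\ exists M : R, forall x, hnorm (S x) <= M * hnorm x.

Definition positive_op (A : V -> V) : Prop := forall x, 0 <= ip (A x) x.

Definition nonzero_op (S : V -> V) : Prop := exists x, S x != 0.


Definition hclosed (P : set V) : Prop :=
  forall u l, (forall n, P (u n)) -> hconv u l -> P l.

Definition hclosure (P : set V) : set V :=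
  [set x | exists u, (forall n, P (u n)) /\ hconv u x].

Definition is_adjoint (S S' : V -> V) : Prop :=
  forall x y, ip (S x) y = ip x (S' y).

Definition is_pos_sqrt (A B : V -> V) : Prop :=
  [/\ bounded_op B, positive_op B & forall x, B (B x) = A x].

Definition Anorm (A : V -> V) (x : V) : R := Num.sqrt (complex.Re (ip (A x) x)).

Definition Aopnorm (A S : V -> V) : R :=
  sup [set r | exists x, [/\ hclosure (range A) x, Anorm A x = 1 & r = Anorm A (S x)]].

Definition in_BAhalf (B S : V -> V) : Prop :=
  bounded_op S /\
  exists S', is_adjoint S S' /\ (range (fun x => S' (B x)) `<=` range B)%classic.

Definition A_invertible (A B S : V -> V) : Prop :=
  exists Rop : V -> V, [/\ nonzero_op Rop, in_BAhalf B Rop,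
     (forall x, A (S (Rop x)) = A x) & (forall x, A (Rop (S x)) = A x)].

Definition rhoA (A B S : V -> V) : set R[i] :=
  [set lam | A_invertible A B (fun x => lam *: x - S x)].

End Hilbert.

(* Let M be the closed range of A and B = A^(1/2).  A gliding-hump argument shows that A is
   bounded below on M, and a Neumann series for m |-> m - b^-2 A m (b a bound of B) shows that
   A maps M onto M; so A has an inverse Ainv on M, and Aproj = Ainv o A is the orthogonal
   projection onto M.  On M the A-seminorm |B .| is equivalent to the norm, and
   lam^-1 Aproj T contracts it with ratio |T|_A / |lam| < 1: a Neumann series in M solves
   lam m - Aproj (T m) = Aproj x, which defines a bounded Rlam x := m.  Since T' contracts the
   norm |B (Ainv .)| on M with the same ratio |T|_A, the same argument solves
   lam^* m - T' m = Aproj y in M, and this gives an adjoint of Rlam with values in M, a subspace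
   of R(B).  Finally A (lam - T) Rlam = A because A o Aproj = A, and A Rlam (lam - T) = A follows by
   pairing with A z and moving Rlam to the other side. *)

From HB Require Import structures.
From mathcomp Require Import all_boot all_order all_algebra.
From mathcomp Require Import boolp classical_sets reals complex.
From mathcomp Require Import ring lra.
Set Implicit Arguments. Unset Strict Implicit. Unset Printing Implicit Defensive.
Import Order.TTheory GRing.Theory Num.Theory Normc.
Local Open Scope complex_scope.
Local Open Scope ring_scope.
Local Notation Re := complex.Re.
Local Notation Im := complex.Im.

Section ComplexFacts.
Variable R : rcfType.
Implicit Types (x y : R[i]) (r : R).

Lemma complex_ext x y : Re x = Re y -> Im x = Im y -> x = y.
Proof. by case: x; case: y => a b c d /= -> ->. Qed.

Lemma Re_conjC x : Re x^* = Re x. Proof. by case: x. Qed.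
Lemma Im_conjC x : Im x^* = - Im x. Proof. by case: x. Qed.
Lemma conjCD x y : (x + y)^* = x^* + y^*. Proof. exact: rmorphD. Qed.
Lemma conjCB x y : (x - y)^* = x^* - y^*. Proof. exact: rmorphB. Qed.
Lemma conjCM x y : (x * y)^* = x^* * y^*. Proof. exact: rmorphM. Qed.

Lemma Re_mul x y : Re (x * y) = Re x * Re y - Im x * Im y. Proof. by case: x; case: y. Qed.
Lemma Im_mul x y : Im (x * y) = Re x * Im y + Im x * Re y. Proof. by case: x; case: y. Qed.

Lemma Re_realM r x : Re (r%:C * x) = r * Re x.
Proof. by rewrite Re_mul /= mul0r subr0. Qed.
Lemma Im_realM r x : Im (r%:C * x) = r * Im x.
Proof. by rewrite Im_mul /= mul0r addr0. Qed.

Lemma ge0_complexE x : 0 <= x -> x = (Re x)%:C.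
Proof. by rewrite lecE => /andP[/eqP]; case: x => a b /= ->. Qed.

Lemma mul_conjC x : x * x^* = (normc x ^+ 2)%:C.
Proof.
apply: complex_ext; rewrite ?Re_mul ?Im_mul Re_conjC Im_conjC /=; last by ring.
by case: x => a b /=; rewrite sqr_sqrtr ?addr_ge0 ?sqr_ge0 //; ring.
Qed.

Lemma normc_real r : normc r%:C = `|r|.
Proof. by rewrite /normc /= expr0n addr0 sqrtr_sqr. Qed.

Lemma normc_conjC x : normc x^* = normc x.
Proof. by case: x => a b; rewrite /normc /= sqrrN. Qed.

Lemma normc_ge0 x : 0 <= normc x.
Proof. by case: x => a b; apply: sqrtr_ge0. Qed.

Lemma normc_normr x : (normc x)%:C = `|x|.
Proof. by case: x => a b; rewrite normc_def. Qed.

End ComplexFacts.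

Section LinearOperators.
Variables (R : realType) (V : lmodType R[i]).
Implicit Types (S : V -> V) (a : R[i]) (x y : V).

Section LinOp.
Variable S : V -> V.
Hypothesis HS : lin_op S.

Lemma lin_opD x y : S (x + y) = S x + S y.
Proof. by rewrite -[x]scale1r HS !scale1r. Qed.
Lemma lin_op0 : S 0 = 0.
Proof. by apply: (addrI (S 0)); rewrite -lin_opD !addr0. Qed.
Lemma lin_opZ a x : S (a *: x) = a *: S x.
Proof. by rewrite -[a *: x]addr0 HS lin_op0 addr0. Qed.
Lemma lin_opN x : S (- x) = - S x.
Proof. by rewrite -scaleN1r lin_opZ scaleN1r. Qed.
Lemma lin_opB x y : S (x - y) = S x - S y.
Proof. by rewrite lin_opD lin_opN. Qed.
End LinOp.

Lemma lin_op_comp S1 S2 : lin_op S1 -> lin_op S2 -> lin_op (S1 \o S2).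
Proof. by move=> h1 h2 a x y /=; rewrite h2 h1. Qed.

Lemma lin_op_scale a0 S : lin_op S -> lin_op (fun x => a0 *: S x).
Proof. by move=> hS a x y; rewrite hS scalerDr !scalerA mulrC. Qed.

Lemma lin_op_subid S : lin_op S -> lin_op (fun x => x - S x).
Proof. by move=> hS a x y; rewrite hS scalerBr opprD addrACA. Qed.

Definition subspace (M : set V) := M 0 /\ forall a x y, M x -> M y -> M (a *: x + y).

Section Subspace.
Variable M : set V.
Hypothesis HM : subspace M.

Lemma subspace0 : M 0. Proof. by case: HM. Qed.
Lemma subspaceZD a x y : M x -> M y -> M (a *: x + y). Proof. by case: HM => _; apply. Qed.
Lemma subspaceD x y : M x -> M y -> M (x + y).
Proof. by move=> Mx My; rewrite -[x]scale1r; apply: subspaceZD. Qed.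
Lemma subspaceZ a x : M x -> M (a *: x).
Proof. by move=> Mx; rewrite -[a *: x]addr0; apply: subspaceZD => //; apply: subspace0. Qed.
Lemma subspaceB x y : M x -> M y -> M (x - y).
Proof. by move=> Mx My; have := subspaceZD (-1) My Mx; rewrite scaleN1r addrC. Qed.
End Subspace.

Lemma range_subspace S : lin_op S -> subspace (range S).
Proof.
move=> hS; split; first by exists 0; rewrite ?lin_op0.
by move=> a _ _ [u _ <-] [v _ <-]; exists (a *: u + v).
Qed.

End LinearOperators.

Section InnerProductSpace.
Variables (R : realType) (V : lmodType R[i]) (ip : V -> V -> R[i]).
Hypothesis Hip : inner_product ip.
Implicit Types (x y z : V) (a : R[i]).
Local Notation hn := (hnorm ip).

Lemma ipDZl a x y z : ip (a *: x + y) z = a * ip x z + ip y z.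
Proof. by case: Hip. Qed.
Lemma ipC x y : ip y x = (ip x y)^*.
Proof. by case: Hip. Qed.

Lemma ipDl x y z : ip (x + y) z = ip x z + ip y z.
Proof. by rewrite -[x]scale1r ipDZl mul1r scale1r. Qed.
Lemma ip0l z : ip 0 z = 0.
Proof. by apply: (addrI (ip 0 z)); rewrite -ipDl !addr0. Qed.
Lemma ipZl a x z : ip (a *: x) z = a * ip x z.
Proof. by rewrite -[a *: x]addr0 ipDZl ip0l addr0. Qed.
Lemma ipBl x y z : ip (x - y) z = ip x z - ip y z.
Proof. by rewrite -scaleN1r addrC ipDZl mulN1r addrC. Qed.
Lemma ipDr x y z : ip x (y + z) = ip x y + ip x z.
Proof. by rewrite ipC ipDl conjCD -!ipC. Qed.
Lemma ipZr a x y : ip x (a *: y) = a^* * ip x y.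
Proof. by rewrite ipC ipZl conjCM -ipC. Qed.
Lemma ip0r x : ip x 0 = 0.
Proof. by rewrite ipC ip0l conjC0. Qed.
Lemma ipBr x y z : ip x (y - z) = ip x y - ip x z.
Proof. by rewrite ipC ipBl conjCB -!ipC. Qed.

Lemma ipNr x y : ip x (- y) = - ip x y.
Proof. by rewrite -(sub0r y) ipBr ip0r sub0r. Qed.

Lemma Re_ipC x y : Re (ip y x) = Re (ip x y).
Proof. by rewrite ipC Re_conjC. Qed.

Lemma ip_injl x y : (forall z, ip x z = ip y z) -> x = y.
Proof.
move=> h; apply/eqP; rewrite -subr_eq0; apply/eqP.
by case: Hip => _ _ _; apply; rewrite ipBl h subrr.
Qed.

Lemma hnorm_ge0 x : 0 <= hn x. Proof. exact: sqrtr_ge0. Qed.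

Lemma ipxxE x : ip x x = (hn x ^+ 2)%:C.
Proof.
have /ge0_complexE {1}-> : 0 <= ip x x by case: Hip.
by rewrite sqr_sqrtr // -lecR -ge0_complexE; case: Hip.
Qed.

Lemma hnorm_sq x : hn x ^+ 2 = Re (ip x x).
Proof. by rewrite ipxxE. Qed.

Lemma hnorm_eq0 x : hn x = 0 -> x = 0.
Proof. by move=> h; case: Hip => _ _ _; apply; rewrite ipxxE h expr0n. Qed.

Lemma hnorm0 : hn 0 = 0.
Proof. by rewrite /hnorm ip0l sqrtr0. Qed.

Lemma hnorm_gt0 x : x != 0 -> 0 < hn x.
Proof. by move=> x0; rewrite lt_def hnorm_ge0 andbT; apply: contra x0 => /eqP/hnorm_eq0->. Qed.

Lemma hnormD_sq x y : hn (x + y) ^+ 2 = hn x ^+ 2 + 2 * Re (ip x y) + hn y ^+ 2.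
Proof. by rewrite !hnorm_sq ipDl !ipDr !raddfD /= (Re_ipC x y); ring. Qed.

Lemma hnormZ a x : hn (a *: x) = normc a * hn x.
Proof.
rewrite /hnorm ipZl ipZr mulrA mul_conjC ipxxE -rmorphM /= sqrtrM ?sqr_ge0 //.
by rewrite !sqrtr_sqr !ger0_norm ?normc_ge0 ?hnorm_ge0.
Qed.

Lemma hnormZr (r : R) x : hn (r%:C *: x) = `|r| * hn x.
Proof. by rewrite hnormZ normc_real. Qed.

Lemma hnormN x : hn (- x) = hn x.
Proof. by rewrite -scaleN1r hnormZ normcN normc1 mul1r. Qed.

Lemma hnormBC x y : hn (x - y) = hn (y - x).
Proof. by rewrite -hnormN opprB. Qed.

(* Cauchy-Schwarz, from  0 <= || |y| x - |x| y ||^2 = 2 |x| |y| (|x| |y| - Re <x, y>). *)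
Lemma Re_ip_le x y : Re (ip x y) <= hn x * hn y.
Proof.
have [->|x0] := eqVneq x 0; first by rewrite ip0l hnorm0 mul0r.
have [->|y0] := eqVneq y 0; first by rewrite ip0r hnorm0 mulr0.
set a := hn y; set b := hn x.
have a0 : 0 < a := hnorm_gt0 y0; have b0 : 0 < b := hnorm_gt0 x0.
have := sqr_ge0 (hn (a%:C *: x - b%:C *: y)).
rewrite hnormD_sq hnormN !hnormZr ipNr raddfN /= Re_ipC ipZl Re_realM.
rewrite (Re_ipC (a%:C *: x)) ipZl Re_realM !gtr0_norm // -/a -/b => h.
have : 0 <= (b * a) * (b * a - Re (ip x y)) by lra.
by rewrite pmulr_rge0 ?mulr_gt0 // subr_ge0.
Qed.

Lemma normr_Re_ip_le x y : `|Re (ip x y)| <= hn x * hn y.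
Proof.
have := Re_ip_le x (- y); rewrite ipNr raddfN hnormN /= => h.
by rewrite ler_norml Re_ip_le andbT lerNl.
Qed.

Lemma hnormD x y : hn (x + y) <= hn x + hn y.
Proof.
rewrite -(ler_pXn2r (_ : 0 < 2)%N) ?nnegrE ?addr_ge0 ?hnorm_ge0 //.
by rewrite hnormD_sq sqrrD; have := Re_ip_le x y; lra.
Qed.

Lemma hnorm_subD x y z : hn (x - z) <= hn (x - y) + hn (y - z).
Proof. by rewrite -[x - z](subrKA y); apply: hnormD. Qed.

Lemma exists_sign_Re_ip x u (a : R) : ip u u = 1 -> 0 <= a ->
  exists eps : R, `|eps| = 1 /\ a <= `|Re (ip (x + (eps * a)%:C *: u) u)|.
Proof.
move=> u1 a0; set r := Re (ip x u).
have Re_eps eps : Re (ip (x + (eps * a)%:C *: u) u) = r + eps * a.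
  by rewrite ipDl ipZl u1 mulr1 raddfD.
have [r0|r0] := lerP 0 r.
  by exists 1; rewrite normr1 Re_eps mul1r ger0_norm; lra.
by exists (-1); rewrite normrN normr1 Re_eps mulN1r ler0_norm; lra.
Qed.

Lemma adjoint_sym S S' : is_adjoint ip S S' -> is_adjoint ip S' S.
Proof. by move=> hS x y; rewrite ipC -hS -ipC. Qed.

Lemma hclosure_id (P : set V) : hclosed ip P -> hclosure ip P = P.
Proof.
move=> Pcl; apply/funext => x; apply/propext; split=> [[u [Pu hu]]|Px]; first exact: Pcl hu.
by exists (fun=> x); split=> // e e0; exists 0%N => n _; rewrite subrr hnorm0.
Qed.

Lemma adjoint_lin_op S S' : is_adjoint ip S S' -> lin_op S.
Proof. by move=> hS a x y; apply: ip_injl => z; rewrite hS ipDZl ipDl ipZl !hS. Qed.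

(* Polarization: the imaginary parts of <S (x + y), x + y> and <S (x + i y), x + i y> vanish. *)
Lemma positive_selfadjoint S : lin_op S -> positive_op ip S -> is_adjoint ip S S.
Proof.
move=> Slin Spos x y.
have Im0 z : Im (ip (S z) z) = 0 by rewrite (ge0_complexE (Spos z)).
have e1 := Im0 (x + y).
rewrite (lin_opD Slin) ipDl !ipDr !raddfD /= !Im0 in e1.
have e2 := Im0 (x + 'i *: y).
rewrite (lin_opD Slin) (lin_opZ Slin) ipDl !ipDr !ipZl !ipZr mulrA in e2.
rewrite mul_conjC !raddfD /= Im_realM !Im0 !Im_mul in e2.
rewrite (ipC (S y)); apply: complex_ext; rewrite ?Re_conjC ?Im_conjC.
  by move: e2 => /=; lra.
by move: e1; lra.
Qed.
End InnerProductSpace.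

Lemma bounded_op_pos (R : realType) (V : lmodType R[i]) (ip : V -> V -> R[i]) (S : V -> V) :
  bounded_op ip S -> exists k, 0 < k /\ forall x, hnorm ip (S x) <= k * hnorm ip x.
Proof.
case=> _ [k hk]; exists (Num.max k 1); split => [|x]; first by rewrite lt_max ltr01 orbT.
by apply: le_trans (hk x) _; rewrite ler_wpM2r ?sqrtr_ge0 // le_max lexx.
Qed.
Section GeometricDecay.
Variable R : archiFieldType.
Implicit Types (q e h x C : R).

Lemma bernoulli_le h n : 0 <= h -> 1 + n%:R * h <= (1 + h) ^+ n.
Proof.
move=> h0; elim: n => [|n IH]; first by rewrite mul0r addr0 expr0.
rewrite exprS -natr1; apply: le_trans (ler_wpM2l (addr_ge0 ler01 h0) IH).
by have := mulr_ge0 (ler0n R n) (sqr_ge0 h); nra.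
Qed.

Lemma exprn_lt q e : 0 <= q < 1 -> 0 < e -> exists n, q ^+ n < e.
Proof.
move=> /andP[q0 q1] e0.
have [->|qn0] := eqVneq q 0; first by exists 1%N; rewrite expr1.
have qp : 0 < q by rewrite lt_def qn0.
set h := q^-1 - 1.
have h0 : 0 < h by rewrite subr_gt0 invf_gt1.
have /archi_boundP : 0 <= (e * h)^-1 by rewrite invr_ge0 ltW // mulr_gt0.
set n := Num.Def.archi_bound _ => hn; exists n.
have : e^-1 < (1 + h) ^+ n.
  apply: lt_le_trans (bernoulli_le n (ltW h0)); rewrite ltr_wpDl //.
  by move: hn; rewrite invfM ltr_pdivrMr.
by rewrite /h addrC subrK exprVn ltf_pV2 ?posrE ?exprn_gt0.
Qed.

Lemma le0_geometric x C q : 0 <= q < 1 -> (forall n, x <= C * q ^+ n) -> x <= 0.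
Proof.
move=> q01 hx; rewrite leNgt; apply/negP => x0.
have C0 : 0 < C by have := hx 0%N; rewrite expr0 mulr1; apply: lt_le_trans.
have [n hn] := exprn_lt q01 (divr_gt0 x0 C0).
by have := hx n; rewrite -ler_pdivrMl // mulrC leNgt hn.
Qed.

End GeometricDecay.

Section Completeness.
Variables (R : realType) (V : lmodType R[i]) (ip : V -> V -> R[i]).
Hypotheses (Hip : inner_product ip) (Hcomp : hcomplete ip).
Local Notation hn := (hnorm ip).

Section GeometricSequence.
Variables (s : nat -> V) (C q : R).
Hypothesis q01 : 0 <= q < 1.
Hypothesis s_step : forall n, hn (s n.+1 - s n) <= C * q ^+ n.

Let q1 : 0 < 1 - q. Proof. by case/andP: q01 => _; rewrite subr_gt0. Qed.
Let C0 : 0 <= C.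
Proof. by have := s_step 0; rewrite expr0 mulr1; apply: le_trans; apply: hnorm_ge0. Qed.

Lemma geometric_tail n m : (n <= m)%N -> hn (s m - s n) <= C * q ^+ n / (1 - q).
Proof.
case/andP: q01 => q0 _; move/subnKC <-; set k := (m - n)%N.
suff: hn (s (n + k) - s n) <= C * (q ^+ n - q ^+ (n + k)) / (1 - q).
  move/le_trans; apply; rewrite ler_pM2r ?invr_gt0 //.
  by rewrite ler_wpM2l // gerBl exprn_ge0.
elim: k => [|k IH]; first by rewrite addn0 !subrr hnorm0 // mulr0 mul0r.
rewrite addnS; apply: le_trans (hnorm_subD Hip _ (s (n + k)) _) _.
apply: le_trans (lerD (s_step _) IH) _; rewrite exprS le_eqVlt; apply/orP; left.
by apply/eqP; field; rewrite gt_eqF.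
Qed.

Lemma hconv_geometric :
  exists l, hconv ip s l /\ forall n, hn (l - s n) <= C * q ^+ n / (1 - q).
Proof.
have tail_small e : 0 < e -> exists N, C * q ^+ N / (1 - q) < e.
  move=> e0; have C1 : 0 < C + 1 by rewrite ltr_wpDl.
  have [N hN] := exprn_lt q01 (divr_gt0 (mulr_gt0 e0 q1) C1).
  exists N; rewrite ltr_pdivrMr //; apply: le_lt_trans (_ : (C + 1) * q ^+ N < _).
    by rewrite ler_wpM2r ?lerDl ?exprn_ge0 //; case/andP: q01.
  by rewrite mulrC -ltr_pdivlMr.
have [l hl] : exists l, hconv ip s l.
  apply: Hcomp => e e0; have [N hN] := tail_small _ (divr_gt0 e0 (ltr0n _ 2)).
  exists N => m n Nm Nn; apply: le_lt_trans (hnorm_subD Hip _ (s N) _) _.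
  rewrite (hnormBC Hip (s N)).
  by have := geometric_tail Nm; have := geometric_tail Nn; lra.
exists l; split => // n; apply/ler_addgt0Pr => e e0.
have [N hN] := hl e e0.
apply: le_trans (hnorm_subD Hip _ (s (maxn N n)) _) _.
rewrite addrC (hnormBC Hip l); apply: lerD; first exact: geometric_tail (leq_maxr N n).
exact/ltW/hN/leq_maxl.
Qed.

End GeometricSequence.

Section NeumannSeries.
Variables (M : set V) (N : V -> R) (K : V -> V) (q k1 k2 : R).
Hypotheses (M_closed : hclosed ip M) (M_sub : subspace M).
Hypotheses (Klin : lin_op K) (KM : forall x, M x -> M (K x)).
Hypotheses (q01 : 0 <= q < 1) (k1_ge0 : 0 <= k1) (k2_ge0 : 0 <= k2).
Hypothesis hn_le_N : forall x, M x -> hn x <= k1 * N x.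
Hypothesis N_le_hn : forall x, M x -> N x <= k2 * hn x.
Hypothesis N_contract : forall x, M x -> N (K x) <= q * N x.

Lemma neumann_solution y : M y ->
  exists x, [/\ M x, x - K x = y & hn x <= k1 * k2 * hn y / (1 - q)].
Proof.
move=> My; have /andP[q0 q1] := q01.
have q1' : 0 < 1 - q by rewrite subr_gt0.
have K_bound w : M w -> hn (K w) <= k1 * q * k2 * hn w.
  move=> Mw; apply: le_trans (hn_le_N (KM Mw)) _; rewrite -!mulrA ler_wpM2l //.
  by apply: le_trans (N_contract Mw) _; rewrite ler_wpM2l // N_le_hn.
pose s n := iter n (fun z => y + K z) 0.
have Ms n : M (s n).
  by elim: n => [|n IH]; [exact: subspace0 | exact: subspaceD (KM IH)].
have MB n : M (s n.+1 - s n) by apply: subspaceB.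
have N_step n : N (s n.+1 - s n) <= q ^+ n * N y.
  elim: n => [|n IH]; first by rewrite /= (lin_op0 Klin) !addr0 subr0 expr0 mul1r.
  have -> : s n.+2 - s n.+1 = K (s n.+1 - s n).
    by rewrite (lin_opB Klin) /= opprD addrACA subrr add0r.
  by apply: le_trans (N_contract (MB n)) _; rewrite exprS -mulrA ler_wpM2l.
have hn_step n : hn (s n.+1 - s n) <= k1 * N y * q ^+ n.
  by apply: le_trans (hn_le_N (MB n)) _; rewrite -mulrA [N y * _]mulrC ler_wpM2l.
have [l [hl l_near]] := hconv_geometric q01 hn_step.
set C := k1 * N y in l_near.
exists l; split; first exact: M_closed hl.
- apply/eqP; rewrite -subr_eq0; apply/eqP/(hnorm_eq0 Hip)/eqP.
  rewrite eq_le hnorm_ge0 andbT.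
  apply: (le0_geometric (C := C * (q + k1 * q * k2) / (1 - q)) q01) => n.
  have -> : l - K l - y = (l - s n.+1) + K (s n - l).
    by rewrite /= (lin_opB Klin) opprD !addrA subrK addrAC.
  have e2 : hn (K (s n - l)) <= k1 * q * k2 * (C * q ^+ n / (1 - q)).
    apply: le_trans (K_bound _ (subspaceB M_sub (Ms n) (M_closed Ms hl))) _.
    by rewrite ler_wpM2l ?mulr_ge0 // (hnormBC Hip) l_near.
  apply: le_trans (hnormD Hip _ _) _; apply: le_trans (lerD (l_near n.+1) e2) _.
  by rewrite exprS le_eqVlt; apply/orP; left; apply/eqP; field; rewrite gt_eqF.
- apply: le_trans (_ : C * q ^+ 0 / (1 - q) <= _).
    by have := l_near 0; rewrite subr0.
  by rewrite expr0 mulr1 ler_pM2r ?invr_gt0 // -mulrA ler_wpM2l // N_le_hn.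
Qed.

End NeumannSeries.
End Completeness.

Section ClosedRange.
Variables (R : realType) (V : lmodType R[i]) (ip : V -> V -> R[i]).
Hypotheses (Hip : inner_product ip) (Hcomp : hcomplete ip).
Local Notation hn := (hnorm ip).
Variable A : V -> V.
Hypotheses (Alin : lin_op A) (Asa : is_adjoint ip A A) (Acl : hclosed ip (range A)).
Let Msub : subspace (range A) := range_subspace Alin.

Lemma bounded_below_of_unit (e : R) : 0 < e ->
    (forall u, range A u -> hn u = 1 -> e <= hn (A u)) ->
  forall m, range A m -> hn m <= e^-1 * hn (A m).
Proof.
move=> e0 he m Mm; have [->|m0] := eqVneq m 0.
  by rewrite (hnorm0 Hip) mulr_ge0 ?hnorm_ge0 // invr_ge0 ltW.
have m0' := hnorm_gt0 Hip m0.
have := he ((hn m)^-1%:C *: m); rewrite (lin_opZ Alin) !(hnormZr Hip).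
rewrite gtr0_norm ?invr_gt0 // mulVf ?gt_eqF //.
move/(_ (subspaceZ Msub _ Mm) erefl).
by rewrite !ler_pdivlMl // mulrC.
Qed.

(* Gliding hump: adding [+- 3^-(n+1) u n] in turn keeps [|Re <x, u n>|] large along a
   convergent series, while [Re <A y, u n> = Re <y, A u n>] decays like [4^-n]. *)
Lemma gliding_hump (u : nat -> V) : (forall n, range A (u n) /\ hn (u n) = 1) ->
  ~ (forall n, hn (A (u n)) < (4^-1) ^+ n).
Proof.
move=> hu hAu.
pose a n : R := (3^-1) ^+ n.+1.
have a_gt0 n : 0 < a n by rewrite exprn_gt0 // invr_gt0.
have unit n : hn (u n) = 1 by case: (hu n).
have ip_uu n : ip (u n) (u n) = 1 by rewrite (ipxxE Hip) unit expr1n.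
have [sgn sgnP] :=
  choice (fun p : V * nat => exists_sign_Re_ip Hip p.1 (ip_uu p.2) (ltW (a_gt0 p.2))).
pose xs := fix xs n := if n is n'.+1 then xs n' + (sgn (xs n', n') * a n')%:C *: u n' else 0.
have M_xs n : range A (xs n).
  elim: n => [|n IH]; first exact: subspace0.
  by apply: subspaceD => //; apply: subspaceZ => //; case: (hu n).
have step n : hn (xs n.+1 - xs n) <= 3^-1 * (3^-1) ^+ n.
  rewrite /= addrC addKr (hnormZr Hip) normrM (sgnP _).1 unit mul1r mulr1.
  by rewrite gtr0_norm // /a exprS.
have [|x [hx x_near]] := hconv_geometric Hip Hcomp _ step.
  by rewrite invr_ge0 ler0n invf_lt1 ?ltr0n ?ltr1n.
have [y _ Ay] := Acl M_xs hx.
have big n : a n / 2 <= `|Re (ip x (u n))|.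
  have hs : a n <= `|Re (ip (xs n.+1) (u n))| := (sgnP (xs n, n)).2.
  have : `|Re (ip (x - xs n.+1) (u n))| <= a n / 2.
    apply: le_trans (normr_Re_ip_le Hip _ _) _; rewrite unit mulr1.
    by apply: le_trans (x_near _) _; rewrite /a !exprS le_eqVlt; apply/orP; left; apply/eqP; field.
  rewrite (ipBl Hip) raddfB /= distrC.
  by have := lerB_dist (Re (ip (xs n.+1) (u n))) (Re (ip x (u n))); lra.
have small n : `|Re (ip x (u n))| <= hn y * (4^-1) ^+ n.
  rewrite -Ay Asa; apply: le_trans (normr_Re_ip_le Hip _ _) _.
  by rewrite ler_wpM2l ?hnorm_ge0 // ltW.
have : (6^-1 : R) <= 0.
  apply: (le0_geometric (C := hn y) (q := 3 / 4)) => [|n].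
    by rewrite divr_ge0 ?ler0n //= ltr_pdivrMr ?ltr0n // mul1r ltr_nat.
  have := le_trans (big n) (small n).
  rewrite /a exprS -(ler_pM2r (exprn_gt0 n (_ : (0 : R) < 3))) ?ltr0n //.
  have -> : 3^-1 * 3^-1 ^+ n / 2 * 3 ^+ n = 6^-1 * (3^-1 * 3 : R) ^+ n by rewrite exprMn; field.
  by rewrite mulVf ?pnatr_eq0 // expr1n mulr1 -mulrA -exprMn [4^-1 * _]mulrC.
by rewrite leNgt invr_gt0 ltr0n.
Qed.

Lemma closed_range_bounded_below :
  exists c, 0 < c /\ forall m, range A m -> hn m <= c * hn (A m).
Proof.
have [[n hn_below]|no_bound] :=
  pselect (exists n : nat, forall u, range A u -> hn u = 1 -> (4^-1) ^+ n <= hn (A u)).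
  have e0 : (0 : R) < (4^-1) ^+ n by rewrite exprn_gt0 // invr_gt0.
  by exists ((4^-1) ^+ n)^-1; rewrite invr_gt0; split => //; apply: bounded_below_of_unit.
have small n : exists u, [/\ range A u, hn u = 1 & hn (A u) < (4^-1) ^+ n].
  apply/not_existsP => none; apply: no_bound; exists n => u Mu u1.
  by rewrite leNgt; apply/negP => h; apply: (none u).
have [u hu] := choice small.
by case: (gliding_hump (u := u)) => [n|n]; case: (hu n).
Qed.

End ClosedRange.

Section SquareRoot.
Variables (R : realType) (V : lmodType R[i]) (ip : V -> V -> R[i]).
Hypothesis Hip : inner_product ip.
Local Notation hn := (hnorm ip).
Variables (A B : V -> V).
Hypothesis hB : is_pos_sqrt ip A B.

Lemma sqrt_lin_op : lin_op B. Proof. by case: hB => -[]. Qed.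
Lemma sqrt_selfadjoint : is_adjoint ip B B.
Proof. by case: hB => _ Bpos _; apply: positive_selfadjoint sqrt_lin_op Bpos. Qed.
Lemma sqrt_sqr x : B (B x) = A x. Proof. by case: hB. Qed.

Lemma sqr_lin_op : lin_op A.
Proof. by move=> a x y; rewrite -!sqrt_sqr; apply: (lin_op_comp sqrt_lin_op sqrt_lin_op). Qed.
Lemma sqr_selfadjoint : is_adjoint ip A A.
Proof. by move=> x y; rewrite -!sqrt_sqr !sqrt_selfadjoint. Qed.

Lemma ip_sqr_sqrt x : ip (A x) x = ip (B x) (B x).
Proof. by rewrite -sqrt_sqr sqrt_selfadjoint. Qed.

Lemma Anorm_sqrt x : Anorm ip A x = hn (B x).
Proof. by rewrite /Anorm ip_sqr_sqrt. Qed.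

Lemma sqrt_ker x : A x = 0 -> B x = 0.
Proof. by move=> Ax0; apply: (hnorm_eq0 Hip); rewrite -Anorm_sqrt /Anorm Ax0 ip0l // sqrtr0. Qed.

End SquareRoot.

Section InverseOnRange.
Variables (R : realType) (V : lmodType R[i]) (ip : V -> V -> R[i]).
Hypotheses (Hip : inner_product ip) (Hcomp : hcomplete ip).
Local Notation hn := (hnorm ip).
Variables (A B : V -> V).
Local Notation M := (range A).
Hypotheses (hB : is_pos_sqrt ip A B) (Acl : hclosed ip M).
Variables (b c : R).
Hypotheses (b_gt0 : 0 < b) (hnB_le : forall x, hn (B x) <= b * hn x).
Hypotheses (c_gt0 : 0 < c) (hnM_le : forall m, M m -> hn m <= c * hn (A m)).

Let Alin := sqr_lin_op hB.
Let Blin := sqrt_lin_op hB.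
Let Msub : subspace M := range_subspace Alin.

Lemma hnA_le x : hn (A x) <= b * hn (B x).
Proof. by rewrite -(sqrt_sqr hB); apply: hnB_le. Qed.

Lemma range_A_inj m m' : M m -> M m' -> A m = A m' -> m = m'.
Proof.
move=> Mm Mm' Am; apply/eqP; rewrite -subr_eq0; apply/eqP/(hnorm_eq0 Hip)/eqP.
rewrite eq_le hnorm_ge0 andbT; apply: le_trans (hnM_le (subspaceB Msub Mm Mm')) _.
by rewrite (lin_opB Alin) Am subrr (hnorm0 Hip) mulr0.
Qed.

(* The [b^-1] makes [b * beta >= 1], so that the ratio in [range_contraction] is real. *)
Let beta := Num.max (c * b) b^-1.
Let beta_gt0 : 0 < beta. Proof. by rewrite lt_max mulr_gt0. Qed.

Lemma range_hnorm_le m : M m -> hn m <= beta * hn (B m).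
Proof.
move=> Mm; apply: le_trans (hnM_le Mm) _.
apply: le_trans (ler_wpM2l (ltW c_gt0) (hnA_le m)) _.
by rewrite mulrA ler_wpM2r ?hnorm_ge0 // /beta le_max lexx.
Qed.

(* With [s = b^-2], [m - s A m] shrinks vectors of [M]:
   [|m - s A m|^2 = |m|^2 - 2 s |B m|^2 + s^2 |A m|^2 <= |m|^2 - s |B m|^2]. *)
Lemma range_contraction m : M m ->
  hn (m - (b ^- 2)%:C *: A m) <= Num.sqrt (1 - b ^- 2 / beta ^+ 2) * hn m.
Proof.
move=> Mm; set s := b ^- 2.
have s_gt0 : 0 < s by rewrite invr_gt0 exprn_gt0.
have sb : s * b ^+ 2 = 1 by rewrite mulVf // gt_eqF // exprn_gt0.
have beta_ge : s / beta ^+ 2 <= 1.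
  have : b^-1 <= beta by rewrite /beta le_max lexx orbT.
  by rewrite ler_pdivrMr ?exprn_gt0 // mul1r /s -exprVn ler_pXn2r //; rewrite nnegrE ?invr_ge0 ltW.
rewrite -(ler_pXn2r (_ : 0 < 2)%N) ?nnegrE ?mulr_ge0 ?sqrtr_ge0 ?hnorm_ge0 //.
rewrite exprMn (@sqr_sqrtr _ (1 - s / beta ^+ 2)) ?subr_ge0 // (hnormD_sq Hip).
rewrite (hnormN Hip) (hnormZr Hip) (ger0_norm (ltW s_gt0)) (ipNr Hip) raddfN /= (Re_ipC Hip).
rewrite (ipZl Hip) Re_realM (ip_sqr_sqrt Hip hB) -(hnorm_sq Hip).
have hA : (s * hn (A m)) ^+ 2 <= s * hn (B m) ^+ 2.
  have hA2 : hn (A m) ^+ 2 <= b ^+ 2 * hn (B m) ^+ 2.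
    by rewrite -exprMn !expr2 ler_pM ?hnorm_ge0 ?hnA_le.
  rewrite exprMn expr2 -mulrA; apply: ler_wpM2l; first exact: ltW.
  by apply: le_trans (ler_wpM2l (ltW s_gt0) hA2) _; rewrite mulrA sb mul1r.
have hm : s / beta ^+ 2 * hn m ^+ 2 <= s * hn (B m) ^+ 2.
  rewrite -mulrA; apply: ler_wpM2l; first exact: ltW.
  by rewrite ler_pdivrMl ?exprn_gt0 // -exprMn !expr2 ler_pM ?hnorm_ge0 ?range_hnorm_le.
lra.
Qed.

Lemma range_A_onto z : M z -> exists2 m, M m & A m = z.
Proof.
move=> Mz; set s := b ^- 2.
have s_gt0 : 0 < s by rewrite invr_gt0 exprn_gt0.
pose K m := m - s%:C *: A m.
have Klin : lin_op K by apply/lin_op_subid/lin_op_scale.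
have KM m : M m -> M (K m).
  by move=> Mm; apply: subspaceB => //; exists (s%:C *: m); rewrite ?(lin_opZ Alin).
have q01 : 0 <= Num.sqrt (1 - s / beta ^+ 2) < 1.
  rewrite sqrtr_ge0 /= -[X in _ < X]sqrtr1 ltr_sqrt ?ltr01 //.
  by have := divr_gt0 s_gt0 (exprn_gt0 2 beta_gt0); lra.
have hn_le m : M m -> hn m <= 1 * hn m by rewrite mul1r.
have [m [Mm Km _]] := neumann_solution Hip Hcomp Acl Msub Klin KM q01 ler01 ler01 hn_le hn_le
  range_contraction (subspaceZ Msub s%:C Mz).
exists m => //; apply: (scalerI (a := s%:C)); first by rewrite fmorph_eq0 gt_eqF.
by rewrite -Km /K opprB addrC subrK.
Qed.

(* [Ainv] inverts [A] on [M] (junk value [0] off [M]); [Aproj] is the orthogonal projection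
   onto [M], whose kernel is that of [A]. *)
Definition Ainv z := xget 0 [set m | M m /\ A m = z].
Definition Aproj y := Ainv (A y).

Lemma AinvP z : M z -> M (Ainv z) /\ A (Ainv z) = z.
Proof.
case/range_A_onto => m Mm Amz.
by apply: (@xgetPex _ 0 [set m | M m /\ A m = z]); exists m.
Qed.

Lemma AinvZ a z : M z -> Ainv (a *: z) = a *: Ainv z.
Proof.
move=> Mz; have [Mi Ai] := AinvP Mz; have [|MiZ AiZ] := AinvP (z := a *: z).
  exact: subspaceZ.
by apply: range_A_inj; rewrite ?(lin_opZ Alin) ?Ai //; apply: subspaceZ.
Qed.

Lemma Aproj_range y : M (Aproj y).
Proof. by case: (AinvP (z := A y)) => //; exists y. Qed.

Lemma A_Aproj y : A (Aproj y) = A y.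
Proof. by case: (AinvP (z := A y)) => //; exists y. Qed.

Lemma Aproj_id m : M m -> Aproj m = m.
Proof. by move=> Mm; apply: range_A_inj => //; [exact: Aproj_range | exact: A_Aproj]. Qed.

Lemma B_Aproj y : B (Aproj y) = B y.
Proof.
apply/eqP; rewrite -subr_eq0 -(lin_opB Blin); apply/eqP/(sqrt_ker Hip hB).
by rewrite (lin_opB Alin) A_Aproj subrr.
Qed.

Lemma ip_Aproj m y : M m -> ip m (Aproj y) = ip m y.
Proof.
case=> u _ <-; apply/eqP; rewrite -subr_eq0 -(ipBr Hip) (sqr_selfadjoint Hip hB).
by rewrite (lin_opB Alin) A_Aproj subrr (ip0r Hip).
Qed.

Lemma ip_Aproj_l m y : M m -> ip (Aproj y) m = ip y m.
Proof. by move=> Mm; rewrite (ipC Hip) ip_Aproj // -(ipC Hip). Qed.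

Lemma hnorm_Aproj y : hn (Aproj y) <= c * (b * b) * hn y.
Proof.
apply: le_trans (hnM_le (Aproj_range y)) _; rewrite A_Aproj -mulrA.
apply: ler_wpM2l; first exact: ltW.
apply: le_trans (hnA_le y) _; rewrite -mulrA.
by apply: ler_wpM2l; [exact: ltW | exact: hnB_le].
Qed.

Lemma Aproj_lin_op : lin_op Aproj.
Proof.
move=> a x y; apply: range_A_inj; first exact: Aproj_range.
  by apply: subspaceZD => //; apply: Aproj_range.
by rewrite Alin !A_Aproj Alin.
Qed.

Section Resolvent.
Variables (T T' : V -> V) (t : R) (lam : R[i]).
Hypotheses (Tlin : lin_op T) (t_ge0 : 0 <= t) (hnT_le : forall x, hn (T x) <= t * hn x).
Hypotheses (Tadj : is_adjoint ip T T') (T'B : (range (fun x => T' (B x)) `<=` range B)%classic).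
Hypothesis A_nonzero : nonzero_op A.
Local Notation alpha := (Aopnorm ip A T).
Hypothesis alpha_lt : alpha < normc lam.

Lemma range_normalized : exists2 x, M x & hn (B x) = 1.
Proof.
have [x0 Ax0] := A_nonzero.
have BAx0 : hn (B (A x0)) != 0.
  apply: contra Ax0 => /eqP/(hnorm_eq0 Hip) BAx0; apply/eqP.
  apply: range_A_inj; [by exists x0 | exact: subspace0 |].
  by rewrite -(sqrt_sqr hB) BAx0 (lin_op0 Blin) (lin_op0 Alin).
exists ((hn (B (A x0)))^-1%:C *: A x0); first by apply: (subspaceZ Msub); exists x0.
by rewrite (lin_opZ Blin) (hnormZr Hip) ger0_norm ?invr_ge0 ?hnorm_ge0 ?mulVf.
Qed.

Let SA :=
  [set r | exists x, [/\ hclosure ip M x, Anorm ip A x = 1 & r = Anorm ip A (T x)]]%classic.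

Lemma Aopnorm_ub x : M x -> hn (B x) = 1 -> hn (B (T x)) <= alpha.
Proof.
have SA_Anorm y : M y -> hn (B y) = 1 -> SA (hn (B (T y))).
  by move=> My By1; exists y; rewrite (hclosure_id Hip Acl) !(Anorm_sqrt Hip hB).
move=> Mx Bx1; apply: sup_upper_bound; last exact: SA_Anorm.
split; first by have [x0 Mx0 Bx0] := range_normalized; exists (hn (B (T x0))); apply: SA_Anorm.
exists (b * t * beta) => r [y []]; rewrite (hclosure_id Hip Acl) => My By1 ->.
rewrite !(Anorm_sqrt Hip hB) in By1 *.
apply: le_trans (hnB_le _) _; rewrite -!mulrA; apply: ler_wpM2l; first exact: ltW.
apply: le_trans (hnT_le _) _; apply: ler_wpM2l => //.
by have := range_hnorm_le My; rewrite By1 mulr1.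
Qed.

Lemma Aopnorm_ge0 : 0 <= alpha.
Proof.
have [x Mx Bx1] := range_normalized.
exact: le_trans (hnorm_ge0 _ _) (Aopnorm_ub Mx Bx1).
Qed.

Lemma hnBT_le x : M x -> hn (B (T x)) <= alpha * hn (B x).
Proof.
move=> Mx; have [Bx0|Bx_neq0] := eqVneq (hn (B x)) 0.
  have x0 : x = 0.
    apply: range_A_inj => //; first exact: subspace0.
    by rewrite -(sqrt_sqr hB) (hnorm_eq0 Hip Bx0) (lin_op0 Blin) (lin_op0 Alin).
  by rewrite x0 (lin_op0 Tlin) (lin_op0 Blin) (hnorm0 Hip) mulr0.
have Bx_gt0 : 0 < hn (B x) by rewrite lt_def Bx_neq0 hnorm_ge0.
have := Aopnorm_ub (subspaceZ Msub (hn (B x))^-1%:C Mx).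
rewrite (lin_opZ Tlin) !(lin_opZ Blin) !(hnormZr Hip).
rewrite ger0_norm ?invr_ge0 ?hnorm_ge0 //.
by rewrite mulVf // => /(_ erefl); rewrite ler_pdivrMl // mulrC.
Qed.

Lemma adjoint_range m : M m -> M (T' m).
Proof.
case=> u _ <-; rewrite -(sqrt_sqr hB).
have [v _ <-] : range B (T' (B (B u))) by apply: T'B; exists (B u).
rewrite -B_Aproj; have [w _ <-] := Aproj_range v.
by exists (B w) => //; rewrite -!(sqrt_sqr hB).
Qed.

Lemma hnB_Ainv_adjoint_le m : M m -> hn (B (Ainv (T' m))) <= alpha * hn (B (Ainv m)).
Proof.
move=> Mm; have [Mw Aw] := AinvP (adjoint_range Mm); have [Mv Av] := AinvP Mm.
set w := Ainv (T' m) in Mw Aw *; set v := Ainv m in Mv Av *.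
have key : hn (B w) ^+ 2 <= hn (B (T w)) * hn (B v).
  rewrite (hnorm_sq Hip) -(ip_sqr_sqrt Hip hB) Aw (Re_ipC Hip) -Tadj -Av -(sqrt_sqr hB).
  by rewrite -(sqrt_selfadjoint Hip hB); apply: Re_ip_le.
have [Bw0|Bw_neq0] := eqVneq (hn (B w)) 0.
  by rewrite Bw0 mulr_ge0 ?Aopnorm_ge0 ?hnorm_ge0.
have Bw_gt0 : 0 < hn (B w) by rewrite lt_def Bw_neq0 hnorm_ge0.
rewrite -(ler_pM2l Bw_gt0) -expr2; apply: le_trans key _.
rewrite mulrA [hn (B w) * _]mulrC.
by apply: ler_wpM2r; [exact: hnorm_ge0 | exact: hnBT_le].
Qed.

Let lam_gt0 : 0 < normc lam := le_lt_trans Aopnorm_ge0 alpha_lt.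
Let lam_neq0 : lam != 0.
Proof. by apply: contraTneq lam_gt0 => ->; rewrite normc0 ltxx. Qed.
Let q := alpha / normc lam.
Let q01 : 0 <= q < 1.
Proof. by rewrite divr_ge0 ?Aopnorm_ge0 ?(ltW lam_gt0) //= ltr_pdivrMr // mul1r. Qed.
Let kappa := beta * b * (normc lam)^-1 / (1 - q) * (c * (b * b)).

Lemma resolvent_solution x :
  exists m, [/\ M m, lam *: m - Aproj (T m) = Aproj x & hn m <= kappa * hn x].
Proof.
pose K m := lam^-1 *: Aproj (T m).
have Klin : lin_op K := lin_op_scale _ (lin_op_comp Aproj_lin_op Tlin).
have KM m : M m -> M (K m) by move=> _; apply: (subspaceZ Msub); apply: Aproj_range.
have K_contract m : M m -> hn (B (K m)) <= q * hn (B m).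
  move=> Mm; rewrite (lin_opZ Blin) (hnormZ Hip) B_Aproj normcV /q [alpha / _]mulrC -mulrA.
  by apply: ler_wpM2l; [rewrite invr_ge0 (ltW lam_gt0) | exact: hnBT_le].
have [m [Mm Km m_le]] := neumann_solution Hip Hcomp Acl Msub Klin KM q01 (ltW beta_gt0)
  (ltW b_gt0) range_hnorm_le (fun x _ => hnB_le x) K_contract
  (subspaceZ Msub lam^-1 (Aproj_range x)).
exists m; split => //.
  apply: (scalerI (a := lam^-1)); first by rewrite invr_eq0.
  by rewrite scalerBr scalerA mulVf // scale1r.
apply: le_trans m_le _; rewrite (hnormZ Hip) normcV.
have -> : beta * b * ((normc lam)^-1 * hn (Aproj x)) / (1 - q) =
          beta * b * (normc lam)^-1 / (1 - q) * hn (Aproj x) by ring.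
rewrite /kappa -[X in _ <= X]mulrA.
apply: ler_wpM2l; last exact: hnorm_Aproj.
have /andP[_ /ltW q1] := q01.
by rewrite divr_ge0 ?mulr_ge0 ?invr_ge0 ?subr_ge0 // ltW.
Qed.

Lemma adjoint_resolvent_solution y : exists m, M m /\ lam^* *: m - T' m = Aproj y.
Proof.
have lamJ_neq0 : lam^* != 0 by rewrite conjC_eq0.
pose K m := (lam^*)^-1 *: T' m.
have Klin : lin_op K := lin_op_scale _ (adjoint_lin_op Hip (adjoint_sym Hip Tadj)).
have KM m : M m -> M (K m) by move=> Mm; apply: (subspaceZ Msub); apply: adjoint_range.
have hn_le m : M m -> hn m <= b * hn (B (Ainv m)).
  by move=> Mm; rewrite -{1}(AinvP Mm).2; apply: hnA_le.
have N_le m : M m -> hn (B (Ainv m)) <= b * c * hn m.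
  move=> Mm; apply: le_trans (hnB_le _) _; rewrite -mulrA; apply: ler_wpM2l; first exact: ltW.
  by have [MAi AAi] := AinvP Mm; rewrite -{2}AAi; apply: hnM_le.
have K_contract m : M m -> hn (B (Ainv (K m))) <= q * hn (B (Ainv m)).
  move=> Mm; rewrite /K AinvZ; last exact: adjoint_range.
  rewrite (lin_opZ Blin) (hnormZ Hip) normcV.
  rewrite normc_conjC /q [alpha / _]mulrC -mulrA.
  by apply: ler_wpM2l; [rewrite invr_ge0 (ltW lam_gt0) | exact: hnB_Ainv_adjoint_le].
have [m [Mm Km _]] := neumann_solution Hip Hcomp Acl Msub Klin KM q01 (ltW b_gt0)
  (mulr_ge0 (ltW b_gt0) (ltW c_gt0)) hn_le N_le K_contract
  (subspaceZ Msub (lam^*)^-1 (Aproj_range y)).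
exists m; split => //; apply: (scalerI (a := (lam^*)^-1)); first by rewrite invr_eq0.
by rewrite scalerBr scalerA mulVf // scale1r.
Qed.

Let Rlam_spec x : set V :=
  [set m | [/\ M m, lam *: m - Aproj (T m) = Aproj x & hn m <= kappa * hn x]].
Let Rlam'_spec y : set V := [set m | M m /\ lam^* *: m - T' m = Aproj y].
Let Rlam x := xget 0 (Rlam_spec x).
Let Rlam' y := xget 0 (Rlam'_spec y).
Let RlamP x : Rlam_spec x (Rlam x) := xgetPex 0 (resolvent_solution x).
Let Rlam'P y : Rlam'_spec y (Rlam' y) := xgetPex 0 (adjoint_resolvent_solution y).

Lemma Rlam_adjoint : is_adjoint ip Rlam Rlam'.
Proof.
move=> x y; have [Mm Em _] := RlamP x; have [Mm' Em'] := Rlam'P y.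
rewrite -(ip_Aproj y Mm) -Em' (ipBr Hip) (ipZr Hip) conjCK -Tadj.
by rewrite -(ip_Aproj_l (T _) Mm') -(ipZl Hip) -(ipBl Hip) Em ip_Aproj_l.
Qed.

Lemma A_resolvent_Rlam x : A (lam *: Rlam x - T (Rlam x)) = A x.
Proof.
have [_ Em _] := RlamP x.
by rewrite (lin_opB Alin) -(A_Aproj (T _)) -(lin_opB Alin) Em A_Aproj.
Qed.

Lemma A_Rlam_resolvent x : A (Rlam (lam *: x - T x)) = A x.
Proof.
apply: (ip_injl Hip) => z; rewrite !(sqr_selfadjoint Hip hB) Rlam_adjoint.
have [_] := Rlam'P (A z); rewrite Aproj_id; last by exists z.
set m := Rlam' (A z); move=> <-.
by rewrite (ipBl Hip) (ipZl Hip) Tadj (ipBr Hip) (ipZr Hip) conjCK.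
Qed.

Lemma resolvent_A_invertible : rhoA ip A B T lam.
Proof.
exists Rlam; split.
- have [x0 Ax0] := A_nonzero; exists x0; apply: contra Ax0 => /eqP R0.
  by rewrite -A_resolvent_Rlam R0 (lin_op0 Tlin) scaler0 subr0 (lin_op0 Alin).
- split.
    split; first exact: (adjoint_lin_op Hip Rlam_adjoint).
    by exists kappa => x; case: (RlamP x).
  exists Rlam'; split; first exact: Rlam_adjoint.
  move=> _ [x _ <-]; have [[u _ <-] _] := Rlam'P (B x).
  by exists (B u); rewrite ?(sqrt_sqr hB).
- exact: A_resolvent_Rlam.
- exact: A_Rlam_resolvent.
Qed.
End Resolvent.
End InverseOnRange.

Theorem mainTheorem3 (R : realType) (V : lmodType R[i]) (ip : V -> V -> R[i])
  (HV : hilbert ip)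
  (A : V -> V) (hAb : bounded_op ip A) (hApos : positive_op ip A)
  (hA0 : nonzero_op A) (hAcl : hclosed ip (range A))
  (Ahalf : V -> V) (hsqrt : is_pos_sqrt ip A Ahalf)
  (T : V -> V) (hT : in_BAhalf ip Ahalf T)
  (lam : R[i]) (hlam : ((Aopnorm ip A T)%:C < `|lam|)%C) :
  rhoA ip A Ahalf T lam.
Proof.
have [Hip Hcomp] := HV.
have [Ahalf_bd _ _] := hsqrt.
have [b [b_gt0 hnB_le]] := bounded_op_pos Ahalf_bd.
have [c [c_gt0 hnM_le]] :=
  closed_range_bounded_below Hip Hcomp (sqr_lin_op hsqrt) (sqr_selfadjoint Hip hsqrt) hAcl.
have [T_bd [T' [Tadj T'B]]] := hT.
have [t [t_gt0 hnT_le]] := bounded_op_pos T_bd.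
apply: (resolvent_A_invertible Hip Hcomp hsqrt hAcl b_gt0 hnB_le c_gt0 hnM_le T_bd.1
  (ltW t_gt0) hnT_le Tadj T'B hA0).
by rewrite -ltcR normc_normr.
Qed.
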